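(* Let $k$ be a finite field of odd characteristic, let $A(t)\in k[t]$ be a square-free polynomial of odd degree $d>1$, and let $f(x)\in k[x]$ be a cubic polynomial such that $y^2=f(x)$ is an elliptic curve over $k$. Let $E_A$ be the elliptic curve over $k(t)$ defined by $A(t)y^2=f(x)$. Let $(F,G)$ be a separable integral point on $E_A$. Then $G$ divides $F'$ and $d/3\leq \deg F < d-1$.
   Context: A separable integral point on $E_A$ is a pair $(F,G)$ with $F,G\in k[t]$, $A(t)G(t)^2=f(F(t))$, and $F'\neq 0$, where $F'$ is the derivative of $F$ with respect to $t$. *)

From HB Require Import structures.
From mathcomp Require Import all_boot all_order all_algebra all_field.
Set Implicit Arguments. Unset Strict Implicit. Unset Printing Implicit Defensive.
Import GRing.Theory.
Local Open Scope ring_scope.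

Definition squarefree_poly (R : idomainType) (p : {poly R}) : Prop :=
  p != 0 /\ forall g : {poly R}, g * g %| p -> (size g <= 1)%N.

(* y^2 = f(x) defines an elliptic curve (odd characteristic):
   f is a cubic with no repeated roots, i.e. separable. *)
Definition elliptic_cubic (k : fieldType) (f : {poly k}) : Prop :=
  size f = 4%N /\ separable_poly f.

Definition separable_integral_point (k : fieldType) (A f F G : {poly k}) : Prop :=
  A * G ^+ 2 = f \Po F /\ F^`() != 0.

From HB Require Import structures.
From mathcomp Require Import all_boot all_order all_algebra all_field.
From mathcomp Require Import zify.
Import GRing.Theory.
Local Open Scope ring_scope.

(* A square factor [g ^+ 2] of [f \Po F] divides [(f \Po F)^`() = (f^`() \Po F) * F^`()],
   and is coprime to [f^`() \Po F] because [f] is separable; hence [g] divides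
   [F^`()].  Comparing degrees in [A * G ^+ 2 = f \Po F] gives
   [deg A + 2 deg G = 3 deg F], and [deg G <= deg F^`() < deg F] then pins
   [deg F] between [deg A / 3] and [deg A - 2]. *)

Section SeparableIntegralPoints.

Set Implicit Arguments.

Context {k : fieldType}.
Implicit Types A f g p F G : {poly k}.

Lemma dvdp_deriv_sq g p : g ^+ 2 %| p -> g %| p^`().
Proof.
case/dvdpP=> q ->; rewrite derivM deriv_exp /= expr1 -mulr_natr !mulrA.
by apply: dvdp_add; [apply: dvdp_mull | apply/dvdp_mulr/dvdp_mull].
Qed.

Lemma dvdp_deriv_comp_sq f F g :
  separable_poly f -> g ^+ 2 %| f \Po F -> g %| F^`().
Proof.
move=> sep_f g2_dvd.
have g_dvd : g %| f \Po F by apply: dvdp_trans g2_dvd; rewrite expr2 dvdp_mulr.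
have cop : coprimep g (f^`() \Po F).
  apply: coprimep_dvdr g_dvd _; apply: coprimep_comp_poly.
  by move: sep_f; rewrite unlock.
by rewrite -(Gauss_dvdpr _ cop) -deriv_comp dvdp_deriv_sq.
Qed.

Lemma integral_point_degree A f F G :
  size f = 4%N -> separable_integral_point A f F G ->
  [/\ (1 < size F)%N, G != 0 & ((size A).-1 + 2 * (size G).-1 = 3 * (size F).-1)%N].
Proof.
move=> size_f [AG dF].
have size_F : (1 < size F)%N.
  by rewrite ltnNge; apply: contra dF => /size1_polyC ->; rewrite derivC.
have deg_fF : (size (f \Po F)).-1 = (3 * (size F).-1)%N by rewrite size_comp_poly size_f.
have fF_neq0 : f \Po F != 0 by rewrite -size_poly_gt0; lia.
have /andP[A_neq0 G_neq0] : (A != 0) && (G != 0).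
  by move: fF_neq0; rewrite -AG mulf_eq0 expf_eq0 negb_or.
split=> //; move: deg_fF; rewrite -AG expr2 mulrA !size_mul ?mulf_neq0 //.
have := size_poly_gt0 A; have := size_poly_gt0 G; rewrite A_neq0 G_neq0.
(* [size_mul] reaches [size A] through the idomain instance path, so its [size]
   terms are only convertible to ours; abstracting them lets [lia] identify them. *)
move: (size A) (size G) (size F); lia.
Qed.

End SeparableIntegralPoints.

Theorem lemma3p2 (k : finFieldType) (A f F G : {poly k}) :
  (2%:R : k) != 0 ->
  squarefree_poly A ->
  odd (size A).-1 -> (1 < (size A).-1)%N ->
  elliptic_cubic f ->
  separable_integral_point A f F G ->
  G %| F^`() /\
  ((size A).-1 <= 3 * (size F).-1)%N /\ ((size F).-1 < (size A).-1.-1)%N.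
Proof.
move=> _ _ _ _ [size_f sep_f] pt.
have [size_F G_neq0 deg_eq] := integral_point_degree size_f pt.
have G_dvd : G %| F^`().
  by apply: dvdp_deriv_comp_sq sep_f _; rewrite -pt.1 dvdp_mull.
split=> //.
have size_G : (size G < size F)%N.
  apply: leq_ltn_trans (dvdp_leq pt.2 G_dvd) (lt_size_deriv _).
  by rewrite -size_poly_gt0 ltnW.
have := size_poly_gt0 G; rewrite G_neq0.
move: (size A) (size G) (size F) size_G size_F deg_eq; lia.
Qed.
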